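(* Let $X$ be a countable Markov shift over the alphabet $\mathbb N$, let $\phi\colon X\to\mathbb R$ be a measurable function, and assume there exists a Gibbs state for the potential $\phi$. Then $\sup\phi<\infty$, $\inf\phi=-\infty$, and $\sup_{n\ge1}D_n(\phi)<\infty$.
   Context: $\mathbb N=\{0,1,2,\dots\}$ with discrete topology; $A$ is a 0-1 matrix indexed by $\mathbb N$ with no zero row or column; $X=\{x\in\mathbb N^{\mathbb N}:A_{x_ix_{i+1}}=1\ \forall i\}$ with product topology and left shift $\sigma$. $E^n$ is the set of admissible strings $w_0\cdots w_{n-1}$ ($A_{w_iw_{i+1}}=1$ for consecutive letters), $[w]=\{x\in X:x_i=w_i,\ i<n\}$. $S_n\varphi=\sum_{i=0}^{n-1}\varphi\circ\sigma^i$. $D_n(\varphi)=\sup_{w\in E^n}\sup_{x,y\in[w]}(S_n\varphi(x)-S_n\varphi(y))$. A Borel probability measure $\mu_\phi$ on $X$ is a Gibbs state for $\phi$ if there are constants $c_0\ge1$, $P\in\mathbb R$ with $c_0^{-1}\le\mu_\phi[x_0,\dots,x_{n-1}]/\exp(-Pn+S_n\phi(x))\le c_0$ for all $n\ge1$, $x\in X$. *)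

From HB Require Import structures.
From mathcomp Require Import all_boot all_order all_algebra.
From mathcomp Require Import all_classical all_reals all_analysis.
Unset Printing Implicit Defensive.
Import Order.TTheory GRing.Theory Num.Theory.
Local Open Scope classical_set_scope.
Local Open Scope ring_scope.

(* A 0-1 matrix indexed by nat is A : nat -> nat -> bool (A a b = true <-> A_{ab} = 1). *)
Definition no_zero_row (A : nat -> nat -> bool) := forall a, exists b, A a b.
Definition no_zero_col (A : nat -> nat -> bool) := forall b, exists a, A a b.

Definition admissible (A : nat -> nat -> bool) (x : nat -> nat) : Prop :=
  forall i, A (x i) (x i.+1).

(* admissible words of length n, encoded as w : nat -> nat of which only
   w 0, ..., w (n-1) matter: E^n *)
Definition admissible_word (A : nat -> nat -> bool) (n : nat) (w : nat -> nat) : Prop :=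
  forall i, (i.+1 < n)%N -> A (w i) (w i.+1).

(* A canonical point of X, used only to equip X with a pointed structure
   (required by the library for measurable types). *)
Definition next_sym (A : nat -> nat -> bool) (hA : no_zero_row A) (a : nat) : nat :=
  ex_minn (hA a).

Lemma next_symP (A : nat -> nat -> bool) (hA : no_zero_row A) a : A a (next_sym A hA a).
Proof. by rewrite /next_sym; case: ex_minnP. Qed.

Definition pt_seq (A : nat -> nat -> bool) (hA : no_zero_row A) (i : nat) : nat :=
  iter i (next_sym A hA) 0.

Lemma pt_seq_adm (A : nat -> nat -> bool) (hA : no_zero_row A) : admissible A (pt_seq A hA).
Proof. by move=> i; rewrite /pt_seq iterS; exact: next_symP. Qed.

Definition shift_space (A : nat -> nat -> bool) (hA : no_zero_row A) : Type :=
  {x : nat -> nat | admissible A x}.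

HB.instance Definition _ {A} (hA : no_zero_row A) :=
  gen_eqMixin (shift_space A hA).
HB.instance Definition _ {A} (hA : no_zero_row A) :=
  gen_choiceMixin (shift_space A hA).
HB.instance Definition _ {A} (hA : no_zero_row A) :=
  isPointed.Build (shift_space A hA) (exist _ (pt_seq A hA) (pt_seq_adm A hA)).

(* The Borel sigma-algebra of X (product topology on N^N, N discrete, restricted
   to X) is generated by the cylinder sets {x in X | x_i = w_i, i < n}. *)
Definition cylinders {A} (hA : no_zero_row A) : set (set (shift_space A hA)) :=
  [set C | exists (n : nat) (w : nat -> nat),
     C = [set x | forall i, (i < n)%N -> proj1_sig x i = w i]].

Definition X {A} (hA : no_zero_row A) := g_sigma_algebraType (cylinders hA).

Definition coord {A} {hA : no_zero_row A} (x : X hA) (i : nat) : nat :=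
  proj1_sig x i.

Definition in_cyl {A} {hA : no_zero_row A} (n : nat) (w : nat -> nat) (x : X hA) : Prop :=
  forall i, (i < n)%N -> coord x i = w i.

Definition cylinder {A} (hA : no_zero_row A) (n : nat) (w : nat -> nat) : set (X hA) :=
  [set x | in_cyl n w x].

Lemma shift_adm (A : nat -> nat -> bool) (x : nat -> nat) : admissible A x -> admissible A (fun i => x i.+1).
Proof. by move=> h i; exact: h. Qed.

Definition lshift {A} {hA : no_zero_row A} (x : X hA) : X hA :=
  exist _ (fun i => proj1_sig x i.+1) (@shift_adm A _ (proj2_sig x)).

Definition Sn {R : realType} {A} {hA : no_zero_row A} (phi : X hA -> R) (n : nat) (x : X hA) : R :=
  \sum_(i < n) phi (iter i (@lshift A hA) x).

Definition gibbs_state {R : realType} {A} {hA : no_zero_row A} (phi : X hA -> R)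
  (mu : probability (X hA) R) : Prop :=
  exists (c0 P : R), 1 <= c0 /\
    forall (n : nat) (x : X hA), (1 <= n)%N ->
      ((c0^-1 * expR (- P * n%:R + Sn phi n x))%:E <= mu (cylinder hA n (coord x)))%E /\
      (mu (cylinder hA n (coord x)) <= (c0 * expR (- P * n%:R + Sn phi n x))%:E)%E.

From Pilot Require Import Defs.
From HB Require Import structures.
From mathcomp Require Import all_boot all_order all_algebra.
From mathcomp Require Import all_classical all_reals all_analysis.
Import Order.TTheory GRing.Theory Num.Theory.
Local Open Scope classical_set_scope.
Local Open Scope ring_scope.

(* The Gibbs inequalities compare the mass of an n-cylinder with
   exp(S_n phi - n P) up to the factor c0.  For n = 1, as the mass is at most 1,
   this gives phi <= P + ln c0.  For two points of one n-cylinder, the lower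
   bound at one point and the upper bound at the other give
   S_n phi x - S_n phi y <= 2 ln c0.  If phi were bounded below by M, each of
   the infinitely many disjoint 1-cylinders [a] would have mass at least
   c0^-1 exp(M - P) > 0, so finitely many of them would already have total
   mass above 1. *)

Lemma trivIset_probability_lbound_le0 {d} {T : measurableType d} {R : realType}
    (mu : probability T R) (F : nat -> set T) (e : R) :
  (forall a, measurable (F a)) -> trivIset setT F ->
  (forall a, (e%:E <= mu (F a))%E) -> e <= 0.
Proof.
move=> mF tF muF; rewrite leNgt; apply/negP => e_gt0.
pose K := (Num.truncn e^-1).+1.
have mUF : measurable (\big[setU/set0]_(a < K) F a) by exact: bigsetU_measurable.
have Ke_le1 : K%:R * e <= 1.
  rewrite -lee_fin; apply: le_trans (probability_le1 mu mUF).
  have -> : (K%:R * e)%:E = \sum_(a < K) e%:E.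
    by rewrite sumEFin sumr_const card_ord mulr_natl.
  rewrite measure_semi_additive //.
  by apply: lee_sum => a _; exact: muF.
have := truncnS_gt e^-1; rewrite -/K -[e^-1]div1r ltr_pdivrMr //.
by rewrite ltNge Ke_le1.
Qed.

Section Cylinders.
Context {A : nat -> nat -> bool} (hA : no_zero_row A).

Lemma measurable_cylinder n w : measurable (cylinder hA n w).
Proof. by apply: sub_sigma_algebra; exists n, w. Qed.

Lemma cylinder_coord {n w} {x : X hA} :
  in_cyl n w x -> cylinder hA n (Defs.coord x) = cylinder hA n w.
Proof.
by move=> xw; apply/seteqP; split => z zx i lt_in; rewrite zx // xw.
Qed.

Lemma trivIset_cylinder1 : trivIset setT (fun a => cylinder hA 1 (fun=> a)).
Proof. by move=> a b _ _ [z [za zb]]; rewrite -(za 0%N) // (zb 0%N). Qed.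

Definition point_from (a : nat) : X hA :=
  exist (admissible A) (fun i => iter i (next_sym A hA) a)
    (fun i => next_symP A hA (iter i (next_sym A hA) a)).

Lemma in_cyl1_point_from a : in_cyl 1 (fun=> a) (point_from a).
Proof. by case. Qed.

End Cylinders.

Lemma Sn1 (R : realType) A (hA : no_zero_row A) (phi : X hA -> R) x :
  Sn phi 1 x = phi x.
Proof. by rewrite /Sn big_ord1. Qed.

Section GibbsState.
Context {R : realType} {A : nat -> nat -> bool} {hA : no_zero_row A}.
Context {phi : X hA -> R} {mu : probability (X hA) R} {c0 P : R}.
Hypothesis c0_ge1 : 1 <= c0.
Hypothesis gibbs : forall (n : nat) (x : X hA), (1 <= n)%N ->
  ((c0^-1 * expR (- P * n%:R + Sn phi n x))%:E <= mu (cylinder hA n (Defs.coord x)))%E /\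
  (mu (cylinder hA n (Defs.coord x)) <= (c0 * expR (- P * n%:R + Sn phi n x))%:E)%E.

Let c0_gt0 : 0 < c0. Proof. exact: lt_le_trans c0_ge1. Qed.

Lemma gibbs_phi_le x : phi x <= P + ln c0.
Proof.
have [lb _] := gibbs 1 x isT; rewrite Sn1 mulr1 in lb.
have : c0^-1 * expR (- P + phi x) <= 1.
  rewrite -lee_fin; apply: le_trans lb _.
  exact: (probability_le1 mu (measurable_cylinder hA 1 (Defs.coord x))).
rewrite ler_pdivrMl // mulr1 -[c0 in _ <= c0]lnK ?posrE // ler_expR.
by rewrite addrC lerBlDl.
Qed.

Lemma gibbs_Sn_distortion n w x y : (1 <= n)%N ->
  in_cyl n w x -> in_cyl n w y -> Sn phi n x - Sn phi n y <= 2 * ln c0.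
Proof.
move=> n_ge1 xw yw.
have [lbx _] := gibbs n x n_ge1; have [_ uby] := gibbs n y n_ge1.
rewrite (cylinder_coord hA xw) in lbx; rewrite (cylinder_coord hA yw) in uby.
have := le_trans lbx uby; rewrite lee_fin ler_pdivrMl // mulrA.
rewrite -ler_pdivrMr ?expR_gt0 // -expRN -expRD opprD addrACA subrr add0r.
by rewrite -{1 2}(lnK c0_gt0) -expRD ler_expR mulr_natl mulr2n.
Qed.

Lemma gibbs_phi_unbounded_below M : exists x, phi x < M.
Proof.
have [//|noM] := pselect (exists x, phi x < M).
suff : c0^-1 * expR (- P + M) <= 0 by rewrite leNgt mulr_gt0 ?invr_gt0 ?expR_gt0.
apply: (trivIset_probability_lbound_le0 mu (fun a => cylinder hA 1 (fun=> a))).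
- by move=> a; exact: measurable_cylinder.
- exact: trivIset_cylinder1.
move=> a; have [lb _] := gibbs 1 (point_from hA a) isT.
rewrite (cylinder_coord hA (in_cyl1_point_from hA a)) Sn1 mulr1 in lb.
apply: le_trans lb; rewrite lee_fin ler_pM2l ?invr_gt0 // ler_expR lerD2l.
by rewrite leNgt; apply/negP => phi_lt; apply: noM; exists (point_from hA a).
Qed.

End GibbsState.

Theorem lemma2p2 (R : realType) (A : nat -> nat -> bool)
  (hrow : no_zero_row A) (hcol : no_zero_col A)
  (phi : X hrow -> R) (phi_meas : measurable_fun setT phi)
  (hgibbs : exists mu : probability (X hrow) R, gibbs_state phi mu) :
  (exists M : R, forall x, phi x <= M) /\
  (forall M : R, exists x, phi x < M) /\
  (exists C : R, forall n : nat, (1 <= n)%N ->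
     forall w : nat -> nat, admissible_word A n w ->
     forall x y : X hrow, in_cyl n w x -> in_cyl n w y ->
       Sn phi n x - Sn phi n y <= C).
Proof.
case: hgibbs => mu [c0 [P [c0_ge1 gibbs]]].
split; first by exists (P + ln c0); exact: gibbs_phi_le c0_ge1 gibbs.
split; first exact: gibbs_phi_unbounded_below c0_ge1 gibbs.
exists (2 * ln c0) => n n_ge1 w _ x y.
exact: gibbs_Sn_distortion c0_ge1 gibbs n w x y n_ge1.
Qed.
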